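(* Let $A$ and $A'$ be conjunctors on $[0,1]$ both having $1$ as a left neutral element, and suppose $A$ is left-continuous with respect to its second variable. Let $I_A(x,y)=\sup\{t\in[0,1]\mid A(x,t)\le y\}$ be the R-implication generated by $A$. Then $I_A$ satisfies (A5) with $A'$ if and only if $A'\le A$ (i.e. $A'(x,y)\le A(x,y)$ for all $x,y\in[0,1]$).
   Context: An aggregation function is a map $A:[0,1]^2\to[0,1]$, non-decreasing in each variable, with $A(0,0)=0$, $A(1,1)=1$. It is a conjunctor if moreover $A(1,0)=A(0,1)=0$. The element $1$ is a left neutral element of $A$ if $A(1,x)=x$ for all $x\in[0,1]$. A fuzzy set on a nonempty set $U$ is a map $D:U\to[0,1]$; it is normal if $D(x_0)=1$ for some $x_0\in U$. For a binary function $I$ on $[0,1]$ and an aggregation function $A'$, ''$I$ satisfies (A5) with $A'$'' means: for all nonempty sets $U,V$, all normal fuzzy sets $D$ on $U$ and $B$ on $V$, and every $y\in V$, $\sup_{x\in U}A'(D(x),I(D(x),B(y)))=B(y)$ (i.e. the inference $B'(y)=\sup_{x\in U}A'(D'(x),I(D(x),B(y)))$ returns $B'=B$ when $D'=D$). *)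

From Stdlib Require Import Reals.
From Coquelicot Require Import Coquelicot.
Open Scope R_scope.

Definition unit_I (x : R) : Prop := 0 <= x <= 1.

(* Binary functions on [0,1] are represented as R -> R -> R; only their values
   on [0,1]^2 matter. *)
Definition aggregation (A : R -> R -> R) : Prop :=
  (forall x y, unit_I x -> unit_I y -> unit_I (A x y)) /\
  (forall x x' y y', unit_I x -> unit_I x' -> unit_I y -> unit_I y' ->
     x <= x' -> y <= y' -> A x y <= A x' y') /\
  A 0 0 = 0 /\ A 1 1 = 1.

Definition conjunctor (A : R -> R -> R) : Prop :=
  aggregation A /\ A 1 0 = 0 /\ A 0 1 = 0.

Definition left_neutral_one (A : R -> R -> R) : Prop :=
  forall x, unit_I x -> A 1 x = x.

Definition left_continuous_2nd (A : R -> R -> R) : Prop :=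
  forall x y, unit_I x -> unit_I y -> 0 < y ->
    forall eps, 0 < eps -> exists delta, 0 < delta /\
      forall t, 0 <= t -> y - delta < t -> t <= y -> Rabs (A x t - A x y) < eps.

Definition R_impl (A : R -> R -> R) (x y : R) : R :=
  real (Lub_Rbar (fun t => unit_I t /\ A x t <= y)).

Definition fuzzy_set {U : Type} (D : U -> R) : Prop := forall u, unit_I (D u).
Definition normal {U : Type} (D : U -> R) : Prop := exists u, D u = 1.

Definition satisfies_A5 (I A' : R -> R -> R) : Prop :=
  forall (U V : Type) (D : U -> R) (B : V -> R),
    fuzzy_set D -> fuzzy_set B -> normal D -> normal B ->
    forall y : V,
      is_lub (fun z => exists x : U, z = A' (D x) (I (D x) (B y))) (B y).

(** The residuum [I_A(x, y)] is the largest [t] with [A(x, t) <= y]: left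
    continuity of [A] makes the supremum attained, so [A(x, I_A(x, y)) <= y],
    while [y <= I_A(x, A(x, y))] holds trivially.  If [A' <= A], every term
    [A'(D u, I_A(D u, B y))] is therefore at most [B y], and at a point where
    [D] equals [1] the term is exactly [B y], because [I_A(1, b) = b] and
    [A'(1, b) = b].  Conversely, (A5) for the two-point fuzzy sets [{1, x}] and
    [{1, A(x, y)}] yields [A'(x, y) <= A'(x, I_A(x, A(x, y))) <= A(x, y)]. *)

From Stdlib Require Import Reals Lra Classical.
From Coquelicot Require Import Coquelicot.
Open Scope R_scope.

Lemma Lub_Rbar_unit_is_lub (E : R -> Prop) :
  E 0 -> (forall t, E t -> t <= 1) -> is_lub E (real (Lub_Rbar E)).
Proof.
  intros E0 E_le1.
  destruct (Lub_Rbar_correct E) as [Hub Hleast].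
  assert (Hge0 : Rbar_le 0 (Lub_Rbar E)) by exact (Hub 0 E0).
  assert (Hle1 : Rbar_le (Lub_Rbar E) 1) by (apply Hleast; exact E_le1).
  destruct (Lub_Rbar E) as [s | |]; simpl in Hge0, Hle1 |- *; try contradiction.
  split.
  - intros t Et. exact (Hub t Et).
  - intros b Hb. exact (Hleast b Hb).
Qed.

Lemma is_lub_approx (E : R -> Prop) (s t : R) :
  is_lub E s -> t < s -> exists u, E u /\ t < u.
Proof.
  intros [_ Hleast] Hts.
  apply NNPP. intros Hnone.
  assert (Hub : is_upper_bound E t).
  { intros u Eu. apply Rnot_lt_le. intros Htu. apply Hnone. now exists u. }
  specialize (Hleast t Hub). lra.
Qed.

Section Conjunctor.

Variable A : R -> R -> R.
Hypothesis HA : conjunctor A.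

Lemma conjunctor_range x y : unit_I x -> unit_I y -> unit_I (A x y).
Proof. exact (proj1 (proj1 HA) x y). Qed.

Lemma conjunctor_mono x x' y y' : unit_I x -> unit_I x' -> unit_I y -> unit_I y' ->
  x <= x' -> y <= y' -> A x y <= A x' y'.
Proof. exact (proj1 (proj2 (proj1 HA)) x x' y y'). Qed.

Lemma conjunctor_x0 x : unit_I x -> A x 0 = 0.
Proof.
  intros Hx.
  assert (H0 : unit_I 0) by (unfold unit_I; lra).
  assert (H1 : unit_I 1) by (unfold unit_I; lra).
  assert (Hle : A x 0 <= A 1 0) by (apply conjunctor_mono; unfold unit_I in *; lra).
  destruct (conjunctor_range x 0 Hx H0) as [Hge _].
  rewrite (proj1 (proj2 HA)) in Hle. lra.
Qed.

Section Residuum.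

Variables x y : R.
Hypotheses (Hx : unit_I x) (Hy : unit_I y).

Lemma R_impl_is_lub : is_lub (fun t => unit_I t /\ A x t <= y) (R_impl A x y).
Proof.
  apply Lub_Rbar_unit_is_lub.
  - split; [unfold unit_I; lra|]. rewrite conjunctor_x0 by exact Hx.
    apply Hy.
  - intros t [[_ Ht] _]. exact Ht.
Qed.

Lemma R_impl_ge t : unit_I t -> A x t <= y -> t <= R_impl A x y.
Proof. intros Ht Hxt. exact (proj1 R_impl_is_lub t (conj Ht Hxt)). Qed.

Lemma R_impl_unit : unit_I (R_impl A x y).
Proof.
  split.
  - apply R_impl_ge; [unfold unit_I; lra|].
    rewrite conjunctor_x0 by exact Hx. apply Hy.
  - apply (proj2 R_impl_is_lub). intros t [[_ Ht] _]. exact Ht.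
Qed.

Lemma R_impl_lt t : 0 <= t < R_impl A x y -> A x t <= y.
Proof.
  intros Ht.
  destruct (is_lub_approx _ _ t R_impl_is_lub (proj2 Ht)) as [u [[Hu Hxu] Htu]].
  apply Rle_trans with (A x u); [|exact Hxu].
  apply conjunctor_mono; unfold unit_I in *; lra.
Qed.

Lemma R_impl_residual : left_continuous_2nd A -> A x (R_impl A x y) <= y.
Proof.
  intros Hlc.
  set (s := R_impl A x y).
  assert (Hs : unit_I s) by exact R_impl_unit.
  destruct (Req_dec s 0) as [Hs0 | Hs0].
  { rewrite Hs0, conjunctor_x0 by exact Hx. apply Hy. }
  apply Rnot_lt_le. intros Hgt.
  destruct (Hlc x s Hx Hs ltac:(unfold unit_I in Hs; lra) (A x s - y) ltac:(lra))
    as [d [Hd Hnear]].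
  set (t := Rmax 0 (s - d / 2)).
  assert (Ht0 : 0 <= t) by apply Rmax_l.
  assert (Htd : s - d / 2 <= t) by apply Rmax_r.
  assert (Hts : t < s) by (apply Rmax_lub_lt; unfold unit_I in Hs; lra).
  specialize (Hnear t Ht0 ltac:(lra) ltac:(lra)).
  assert (Hxt : A x t <= y) by (apply R_impl_lt; split; assumption).
  apply Rabs_def2 in Hnear. lra.
Qed.

End Residuum.

Lemma R_impl_self_ge x y : unit_I x -> unit_I y -> y <= R_impl A x (A x y).
Proof.
  intros Hx Hy.
  apply R_impl_ge; [exact Hx | exact (conjunctor_range x y Hx Hy) | exact Hy | lra].
Qed.

Lemma R_impl_1l y : left_neutral_one A -> left_continuous_2nd A -> unit_I y ->
  R_impl A 1 y = y.
Proof.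
  intros Hneutral Hlc Hy.
  assert (H1 : unit_I 1) by (unfold unit_I; lra).
  apply Rle_antisym.
  - rewrite <- (Hneutral (R_impl A 1 y)) by exact (R_impl_unit 1 y H1 Hy).
    exact (R_impl_residual 1 y H1 Hy Hlc).
  - apply R_impl_ge; [exact H1 | exact Hy | exact Hy | rewrite Hneutral by exact Hy; lra].
Qed.

End Conjunctor.

Lemma satisfies_A5_le (A A' : R -> R -> R) :
  conjunctor A -> conjunctor A' -> satisfies_A5 (R_impl A) A' ->
  forall x y, unit_I x -> unit_I y -> A' x y <= A x y.
Proof.
  intros HA HA' HA5 x y Hx Hy.
  assert (Hxy : unit_I (A x y)) by exact (conjunctor_range A HA x y Hx Hy).
  set (D := fun b : bool => if b then 1 else x).
  set (B := fun b : bool => if b then 1 else A x y).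
  assert (HD : fuzzy_set D) by (intros []; simpl; unfold unit_I in *; lra).
  assert (HB : fuzzy_set B) by (intros []; simpl; unfold unit_I in *; lra).
  destruct (HA5 bool bool D B HD HB (ex_intro _ true eq_refl) (ex_intro _ true eq_refl)
              false) as [Hub _].
  specialize (Hub _ (ex_intro _ false eq_refl)). simpl in Hub.
  apply Rle_trans with (A' x (R_impl A x (A x y))); [|exact Hub].
  apply (conjunctor_mono A' HA'); [exact Hx | exact Hx | exact Hy | | apply Rle_refl |].
  - exact (R_impl_unit A HA x (A x y) Hx Hxy).
  - exact (R_impl_self_ge A HA x y Hx Hy).
Qed.

Lemma le_satisfies_A5 (A A' : R -> R -> R) :
  conjunctor A -> left_neutral_one A -> left_neutral_one A' -> left_continuous_2nd A ->
  (forall x y, unit_I x -> unit_I y -> A' x y <= A x y) ->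
  satisfies_A5 (R_impl A) A'.
Proof.
  intros HA HnA HnA' Hlc Hle U V D B HD HB [u0 Hu0] _ v. split.
  - intros z [u ->].
    apply Rle_trans with (A (D u) (R_impl A (D u) (B v))).
    + apply Hle; [apply HD | exact (R_impl_unit A HA _ _ (HD u) (HB v))].
    + exact (R_impl_residual A HA _ _ (HD u) (HB v) Hlc).
  - intros b Hb. apply Hb. exists u0.
    rewrite Hu0, (R_impl_1l A HA (B v) HnA Hlc (HB v)), HnA' by apply HB.
    reflexivity.
Qed.

Theorem theorem4p3 (A A' : R -> R -> R) :
  conjunctor A -> conjunctor A' ->
  left_neutral_one A -> left_neutral_one A' ->
  left_continuous_2nd A ->
  (satisfies_A5 (R_impl A) A' <->
   (forall x y, unit_I x -> unit_I y -> A' x y <= A x y)).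
Proof.
  intros HA HA' HnA HnA' Hlc. split.
  - exact (satisfies_A5_le A A' HA HA').
  - exact (le_satisfies_A5 A A' HA HnA HnA' Hlc).
Qed.
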